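(* Let $r\ge 1$ be an integer, let $k_1,\dots,k_r$ be integers, and let $a,b>0$ with $ab\neq \pm 1$. Then for every integer $n\ge 0$, $$\mathbf{E}_{n}^{(k_1,\dots,k_r)}(a,b)=\mathbf{E}_{n}^{(k_1,\dots,k_r)}\!\left(\frac{\ln a}{\ln a+\ln b}\right)(\ln a+\ln b)^n .$$
   Context: For integers $k_1,\dots,k_r$, the multi-polylogarithm is $Li_{(k_1,\dots,k_r)}(z)=\sum_{0<m_1<m_2<\dots<m_r}\frac{z^{m_r}}{m_1^{k_1}m_2^{k_2}\cdots m_r^{k_r}}$ (sum over integers). For $c>0$, $c^t:=e^{t\ln c}$. The Multi Poly-Euler polynomials $\mathbf{E}_n^{(k_1,\dots,k_r)}(x)$ are defined by the generating series $$\frac{2Li_{(k_1,\dots,k_r)}(1-e^{-t})}{(1+e^t)^r}e^{rxt}=\sum_{n=0}^{\infty}\mathbf{E}_{n}^{(k_1,\dots,k_r)}(x)\frac{t^n}{n!}.$$ The generalized Multi Poly-Euler polynomials with parameters $a,b$ are defined by $$\frac{2Li_{(k_1,\dots,k_r)}(1-(ab)^{-t})}{(a^{-t}+b^t)^r}e^{rxt}=\sum_{n=0}^{\infty}\mathbf{E}_{n}^{(k_1,\dots,k_r)}(x;a,b)\frac{t^n}{n!},$$ and $\mathbf{E}_{n}^{(k_1,\dots,k_r)}(a,b):=\mathbf{E}_{n}^{(k_1,\dots,k_r)}(0;a,b)$. *)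

From Stdlib Require Import Reals ZArith List.
From Coquelicot Require Import Coquelicot.
Import ListNotations.
Open Scope R_scope.

(* inner_sum ks m, for ks = [k_j; ...; k_1] (REVERSED order), is
   sum_{0 < m_1 < ... < m_j < m} 1 / (m_1^{k_1} ... m_j^{k_j});
   the empty product (ks = []) gives 1. *)
Fixpoint inner_sum (ks : list Z) (m : nat) : R :=
  match ks with
  | [] => 1
  | k :: ks' =>
      sum_n (fun p => if (p =? 0)%nat then 0
                      else inner_sum ks' p / powerRZ (INR p) k) (m - 1)
  end.

(* Multi-polylogarithm Li_{(k_1,...,k_r)}(z) for ks = [k_1; ...; k_r]:
   sum_{0<m_1<...<m_r} z^{m_r} / (m_1^{k_1} ... m_r^{k_r}),
   the sum being grouped by the value of the largest index m_r. *)
Definition Li (ks : list Z) (z : R) : R :=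
  match rev ks with
  | [] => 0
  | kr :: rest =>
      Series (fun m => z ^ (S m) / powerRZ (INR (S m)) kr * inner_sum rest (S m))
  end.

Definition EGF (ks : list Z) (x t : R) : R :=
  let r := length ks in
  2 * Li ks (1 - exp (- t)) / (1 + exp t) ^ r * exp (INR r * x * t).

(* E_n^{(ks)}(x) = n! [t^n] EGF = n-th derivative at t = 0. *)
Definition MPEuler (n : nat) (ks : list Z) (x : R) : R :=
  Derive_n (fun t => EGF ks x t) n 0.

Definition EGFab (ks : list Z) (a b x t : R) : R :=
  let r := length ks in
  2 * Li ks (1 - Rpower (a * b) (- t)) / (Rpower a (- t) + Rpower b t) ^ r
    * exp (INR r * x * t).

Definition MPEuler_gen (n : nat) (ks : list Z) (x a b : R) : R :=
  Derive_n (fun t => EGFab ks a b x t) n 0.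

Definition MPEuler_ab (n : nat) (ks : list Z) (a b : R) : R :=
  MPEuler_gen n ks 0 a b.

(* Put L = ln a + ln b.  Then (ab)^(-t) = e^(-Lt) and a^(-t) + b^t = a^(-t) (1 + e^(Lt)),
   so the generating function of E_n(x;a,b) at t is the Multi Poly-Euler generating
   function with parameter (x + ln a)/L evaluated at Lt, and differentiating n times at 0
   produces the factor L^n.  This chain rule needs the Multi Poly-Euler generating function
   to be smooth near 0: Li(z) is z times a power series whose coefficients grow
   polynomially, hence of radius at least 1, and 1 - e^(-t) stays in the unit disc for
   t > -ln 2; all factors then lie in a class of functions closed under differentiation. *)

From Stdlib Require Import Reals ZArith List Lra Lia.
From Coquelicot Require Import Coquelicot.
Import ListNotations.
Open Scope R_scope.

Section DeriveStableClass.

Variable D : R -> Prop.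
Variable C : (R -> R) -> Prop.
Hypothesis D_open : open D.
Hypothesis ex_derive_class : forall f y, C f -> D y -> ex_derive f y.
Hypothesis Derive_class :
  forall f, C f -> exists g, C g /\ forall y, D y -> Derive f y = g y.

Lemma Derive_n_class n f :
  C f -> exists g, C g /\ forall y, D y -> Derive_n f n y = g y.
Proof.
  intros Cf; induction n as [|n [g [Cg Hg]]].
  - now exists f.
  - destruct (Derive_class g Cg) as [h [Ch Hh]].
    exists h; split; [exact Ch|].
    intros y Dy; simpl; rewrite <- Hh by exact Dy.
    apply Derive_ext_loc, (filter_imp D); [exact Hg | exact (D_open y Dy)].
Qed.

Lemma ex_derive_n_class n f y : C f -> D y -> ex_derive_n f n y.
Proof.
  intros Cf Dy; destruct n as [|n]; [exact I|].
  destruct (Derive_n_class n f Cf) as [g [Cg Hg]].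
  apply (ex_derive_ext_loc g); [|exact (ex_derive_class g y Cg Dy)].
  apply (filter_imp D); [|exact (D_open y Dy)].
  intros t Dt; symmetry; exact (Hg t Dt).
Qed.

End DeriveStableClass.

Definition egf_domain (y : R) : Prop := - ln 2 < y.

Lemma egf_domain_open : open egf_domain.
Proof. exact (open_gt _). Qed.

Lemma egf_domain_0 : egf_domain 0.
Proof.
  unfold egf_domain.
  assert (ln 1 < ln 2) by (apply ln_increasing; lra).
  rewrite ln_1 in *; lra.
Qed.

Lemma Rabs_1_minus_exp_opp_lt_1 y : egf_domain y -> Rabs (1 - exp (- y)) < 1.
Proof.
  unfold egf_domain; intros Hy.
  assert (Hlt : exp (- y) < 2).
  { rewrite <- (exp_ln 2) by lra; apply exp_increasing; lra. }
  pose proof (exp_pos (- y)).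
  apply Rabs_def1; lra.
Qed.

Inductive egf_term : (R -> R) -> Prop :=
  | egf_const c : egf_term (fun _ => c)
  | egf_exp c : egf_term (fun s => exp (c * s))
  | egf_inv_1pexp : egf_term (fun s => / (1 + exp s))
  | egf_pseries a : Rbar_le 1 (CV_radius a) ->
      egf_term (fun s => PSeries a (1 - exp (- s)))
  | egf_plus f g : egf_term f -> egf_term g -> egf_term (fun s => f s + g s)
  | egf_mult f g : egf_term f -> egf_term g -> egf_term (fun s => f s * g s).

Lemma is_derive_exp_scal c y : is_derive (fun s => exp (c * s)) y (c * exp (c * y)).
Proof. auto_derive; [exact I | ring]. Qed.

Lemma is_derive_inv_1pexp y :
  is_derive (fun s => / (1 + exp s)) y (- exp y * (/ (1 + exp y) * / (1 + exp y))).
Proof.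
  pose proof (exp_pos y).
  auto_derive; [lra | field; lra].
Qed.

Lemma is_derive_PSeries_1_minus_exp_opp a y :
  Rbar_le 1 (CV_radius a) -> egf_domain y ->
  is_derive (fun s => PSeries a (1 - exp (- s))) y
    (PSeries (PS_derive a) (1 - exp (- y)) * exp (- y)).
Proof.
  intros Ha Dy.
  assert (Hin : Rbar_lt (Rabs (1 - exp (- y))) (CV_radius a)).
  { apply (Rbar_lt_le_trans _ 1); [exact (Rabs_1_minus_exp_opp_lt_1 y Dy) | exact Ha]. }
  rewrite Rmult_comm.
  apply (is_derive_comp (PSeries a) (fun s => 1 - exp (- s))).
  - exact (is_derive_PSeries a _ Hin).
  - auto_derive; [exact I | ring].
Qed.

Lemma ex_derive_egf_term f y : egf_term f -> egf_domain y -> ex_derive f y.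
Proof.
  intros Hf Dy; induction Hf.
  - apply ex_derive_const.
  - eexists; apply is_derive_exp_scal.
  - eexists; apply is_derive_inv_1pexp.
  - eexists; apply is_derive_PSeries_1_minus_exp_opp; assumption.
  - apply (ex_derive_plus f g); assumption.
  - apply (ex_derive_mult f g); assumption.
Qed.

Lemma Derive_egf_term f :
  egf_term f -> exists g, egf_term g /\ forall y, egf_domain y -> Derive f y = g y.
Proof.
  induction 1 as [c|c| |a Ha|f g Hf [f' [Hf' Ef]] Hg [g' [Hg' Eg]]
                 |f g Hf [f' [Hf' Ef]] Hg [g' [Hg' Eg]]].
  - exists (fun _ => 0); split; [constructor | intros; apply Derive_const].
  - exists (fun s => c * exp (c * s)); split; [repeat constructor|].
    intros y _; apply is_derive_unique, is_derive_exp_scal.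
  - exists (fun s => (-1 * exp (1 * s)) * (/ (1 + exp s) * / (1 + exp s))).
    split; [repeat constructor|].
    intros y _; replace (-1 * exp (1 * y)) with (- exp y) by (rewrite Rmult_1_l; ring).
    apply is_derive_unique, is_derive_inv_1pexp.
  - exists (fun s => PSeries (PS_derive a) (1 - exp (- s)) * exp (-1 * s)).
    split.
    + constructor; [|constructor].
      constructor; rewrite CV_radius_derive; exact Ha.
    + intros y Dy; replace (-1 * y) with (- y) by ring.
      exact (is_derive_unique _ _ _ (is_derive_PSeries_1_minus_exp_opp a y Ha Dy)).
  - exists (fun s => f' s + g' s); split; [now constructor|].
    intros y Dy; rewrite Derive_plus, Ef, Eg by (auto || now apply ex_derive_egf_term).
    reflexivity.
  - exists (fun s => f' s * g s + f s * g' s); split; [repeat constructor; assumption|].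
    intros y Dy; rewrite Derive_mult, Ef, Eg by (auto || now apply ex_derive_egf_term).
    reflexivity.
Qed.

Lemma ex_derive_n_egf_term f n y : egf_term f -> egf_domain y -> ex_derive_n f n y.
Proof.
  apply (ex_derive_n_class egf_domain egf_term egf_domain_open
           ex_derive_egf_term Derive_egf_term).
Qed.

Lemma CV_radius_le_abs (a b : nat -> R) :
  (forall n, Rabs (a n) <= Rabs (b n)) -> Rbar_le (CV_radius b) (CV_radius a).
Proof.
  intros Hab; destruct (CV_radius_bounded b) as [_ Hlub]; apply Hlub.
  intros r [M HM]; destruct (CV_radius_bounded a) as [Hub _]; apply Hub.
  exists M; intros n; eapply Rle_trans; [|apply HM].
  rewrite !Rabs_mult; apply Rmult_le_compat_r; [apply Rabs_pos | apply Hab].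
Qed.

Lemma fact_mul_pow_le k K : ((k + 1) ^ K * fact k <= fact (k + K))%nat.
Proof.
  induction K as [|K IH].
  - rewrite Nat.add_0_r; simpl; lia.
  - replace (k + S K)%nat with (S (k + K)) by lia.
    change (fact (S (k + K))) with (S (k + K) * fact (k + K))%nat.
    rewrite Nat.pow_succ_r'; nia.
Qed.

(* The coefficients of the K-th derivative of sum x^n are (n+1)...(n+K) >= (n+1)^K. *)
Lemma pow_le_PS_derive_n_1 K n : INR (S n) ^ K <= PS_derive_n K (fun _ => 1) n.
Proof.
  unfold PS_derive_n; rewrite Rmult_1_r.
  pose proof (lt_0_INR _ (lt_O_fact n)) as Hfact.
  pose proof (le_INR _ _ (fact_mul_pow_le n K)) as Hle.
  rewrite mult_INR, pow_INR, Nat.add_1_r in Hle.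
  apply (Rmult_le_reg_r (INR (fact n))); [exact Hfact|].
  unfold Rdiv; rewrite Rmult_assoc, Rinv_l, Rmult_1_r by lra; exact Hle.
Qed.

Lemma CV_radius_polynomial_growth (a : nat -> R) K :
  (forall n, Rabs (a n) <= INR (S n) ^ K) -> Rbar_le 1 (CV_radius a).
Proof.
  intros Ha.
  assert (H1 : Rbar_le 1 (CV_radius (fun _ => 1))).
  { destruct (CV_radius_bounded (fun _ => 1)) as [Hub _]; apply Hub.
    exists 1; intros n; rewrite Rmult_1_l, pow1, Rabs_R1; lra. }
  apply (Rbar_le_trans _ _ _ H1); rewrite <- (CV_radius_derive_n K).
  apply CV_radius_le_abs; intros n.
  eapply Rle_trans; [apply Ha|]; eapply Rle_trans; [apply pow_le_PS_derive_n_1|].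
  apply Rle_abs.
Qed.

Lemma Rabs_inv_powerRZ_le p k :
  (1 <= p)%nat -> Rabs (/ powerRZ (INR p) k) <= INR p ^ Z.abs_nat k.
Proof.
  intros Hp; assert (H1 : 1 <= INR p) by (apply (le_INR 1); exact Hp).
  destruct k as [|q|q]; simpl.
  - rewrite Rinv_1, Rabs_R1; lra.
  - assert (1 <= INR p ^ Pos.to_nat q) by (apply pow_R1_Rle; exact H1).
    rewrite Rabs_pos_eq by (left; apply Rinv_0_lt_compat; lra).
    apply Rle_trans with 1; [|assumption].
    rewrite <- Rinv_1; apply Rinv_le_contravar; lra.
  - assert (1 <= INR p ^ Pos.to_nat q) by (apply pow_R1_Rle; exact H1).
    rewrite Rinv_inv, Rabs_pos_eq; lra.
Qed.

Fixpoint inner_sum_degree (ks : list Z) : nat :=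
  match ks with
  | [] => 0
  | k :: ks' => S (inner_sum_degree ks' + Z.abs_nat k)
  end.

Lemma inner_sum_growth ks m :
  (1 <= m)%nat -> Rabs (inner_sum ks m) <= INR m ^ inner_sum_degree ks.
Proof.
  revert m; induction ks as [|k ks IH]; intros m Hm; simpl.
  - rewrite Rabs_R1; lra.
  - set (B := INR m ^ inner_sum_degree ks * INR m ^ Z.abs_nat k).
    assert (HB : forall p, (p <= m - 1)%nat ->
              Rabs (if (p =? 0)%nat then 0 else inner_sum ks p / powerRZ (INR p) k) <= B).
    { intros p Hp; destruct (Nat.eqb_spec p 0).
      - rewrite Rabs_R0; unfold B; apply Rmult_le_pos; apply pow_le, pos_INR.
      - assert (Hpm : 0 <= INR p <= INR m) by (split; [apply pos_INR | apply le_INR; lia]).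
        unfold Rdiv; rewrite Rabs_mult; apply Rmult_le_compat; try apply Rabs_pos.
        + eapply Rle_trans; [apply IH; lia | apply pow_incr, Hpm].
        + eapply Rle_trans; [apply Rabs_inv_powerRZ_le; lia | apply pow_incr, Hpm]. }
    rewrite sum_n_Reals; eapply Rle_trans; [apply Rabs_triang_gen|].
    eapply Rle_trans; [apply (sum_Rle _ (fun _ => B)), HB|].
    rewrite sum_cte; unfold B; rewrite <- pow_add.
    replace (S (m - 1)) with m by lia; right; ring.
Qed.

(* Coefficient m collects the terms with largest index m_r = m + 1. *)
Definition Li_coef (ks : list Z) : nat -> R :=
  match rev ks with
  | [] => fun _ => 0
  | kr :: rest => fun m => inner_sum rest (S m) / powerRZ (INR (S m)) kr
  end.

Lemma Li_PSeries ks z : Li ks z = z * PSeries (Li_coef ks) z.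
Proof.
  unfold Li, Li_coef, PSeries; destruct (rev ks) as [|kr rest].
  - rewrite (Series_ext _ (fun n => 0 * 0)) by (intros; ring).
    rewrite Series_scal_l; ring.
  - rewrite <- Series_scal_l; apply Series_ext; intros n; simpl; unfold Rdiv; ring.
Qed.

Lemma CV_radius_Li_coef ks : Rbar_le 1 (CV_radius (Li_coef ks)).
Proof.
  unfold Li_coef; destruct (rev ks) as [|kr rest].
  - rewrite CV_radius_const_0; simpl; lra.
  - apply (CV_radius_polynomial_growth _ (inner_sum_degree rest + Z.abs_nat kr)).
    intros n; rewrite pow_add; unfold Rdiv; rewrite Rabs_mult.
    apply Rmult_le_compat; try apply Rabs_pos.
    + apply inner_sum_growth; lia.
    + apply Rabs_inv_powerRZ_le; lia.
Qed.

Lemma ex_derive_n_EGF ks x n y : egf_domain y -> ex_derive_n (EGF ks x) n y.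
Proof.
  intros Dy.
  set (F := fun s => 2 * ((1 + -1 * exp (-1 * s)) * PSeries (Li_coef ks) (1 - exp (- s)))
                     * (/ (1 + exp s)) ^ length ks * exp ((INR (length ks) * x) * s)).
  assert (HF : egf_term F).
  { assert (Hpow : forall r, egf_term (fun s => (/ (1 + exp s)) ^ r)).
    { induction r; [exact (egf_const 1) | exact (egf_mult _ _ egf_inv_1pexp IHr)]. }
    apply egf_mult; [apply egf_mult; [apply egf_mult|]|].
    - apply egf_const.
    - apply egf_mult; [apply egf_plus; [apply egf_const|]|].
      + apply (egf_mult (fun _ => -1)); [apply egf_const | apply egf_exp].
      + apply egf_pseries, CV_radius_Li_coef.
    - apply Hpow.
    - apply egf_exp. }
  apply (ex_derive_n_ext F); [|exact (ex_derive_n_egf_term F n y HF Dy)].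
  intros s; unfold F, EGF; rewrite Li_PSeries, pow_inv.
  replace (-1 * s) with (- s) by ring; unfold Rdiv; ring.
Qed.

Lemma ln_add_ln_neq_0 a b : 0 < a -> 0 < b -> a * b <> 1 -> ln a + ln b <> 0.
Proof.
  intros Ha Hb Hab HL; apply Hab.
  rewrite <- ln_mult in HL by assumption.
  rewrite <- (exp_ln (a * b)), HL by (apply Rmult_lt_0_compat; assumption).
  apply exp_0.
Qed.

Lemma EGFab_eq_EGF_scale ks a b x t :
  0 < a -> 0 < b -> ln a + ln b <> 0 ->
  EGFab ks a b x t =
  EGF ks ((x + ln a) / (ln a + ln b)) ((ln a + ln b) * t).
Proof.
  intros Ha Hb HL; set (L := ln a + ln b); set (r := length ks).
  unfold EGFab, EGF, Rpower; fold r.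
  set (u := exp (t * ln a)).
  assert (Hu : 0 < u) by apply exp_pos.
  assert (Hab : exp (- t * ln (a * b)) = exp (- (L * t))).
  { rewrite ln_mult by assumption; f_equal; unfold L; ring. }
  assert (Hden : exp (- t * ln a) + exp (t * ln b) = / u * (1 + exp (L * t))).
  { unfold u; rewrite <- exp_Ropp, Rmult_plus_distr_l, Rmult_1_r, <- !exp_plus.
    f_equal; [f_equal; ring | f_equal; unfold L; ring]. }
  assert (Hexp : exp (INR r * ((x + ln a) / L) * (L * t)) = exp (INR r * x * t) * u ^ r).
  { unfold u; rewrite <- (Rpower_pow r (exp (t * ln a))) by apply exp_pos.
    unfold Rpower; rewrite ln_exp, <- exp_plus; f_equal; field; exact HL. }
  rewrite Hab, Hden, Hexp, Rpow_mult_distr, pow_inv.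
  assert (0 < 1 + exp (L * t)) by (pose proof (exp_pos (L * t)); lra).
  field; split; apply pow_nonzero; lra.
Qed.

Theorem MPEuler_gen_scale ks a b x n :
  0 < a -> 0 < b -> a * b <> 1 ->
  MPEuler_gen n ks x a b =
  MPEuler n ks ((x + ln a) / (ln a + ln b)) * (ln a + ln b) ^ n.
Proof.
  intros Ha Hb Hab; pose proof (ln_add_ln_neq_0 a b Ha Hb Hab) as HL.
  unfold MPEuler_gen, MPEuler.
  rewrite (Derive_n_ext (fun t => EGFab ks a b x t)
    (fun t => EGF ks ((x + ln a) / (ln a + ln b)) ((ln a + ln b) * t)) n 0
    (fun t => EGFab_eq_EGF_scale ks a b x t Ha Hb HL)).
  rewrite Derive_n_comp_scal, Rmult_0_r; [apply Rmult_comm|].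
  rewrite Rmult_0_r; apply (filter_imp egf_domain).
  - intros y Dy k _; apply ex_derive_n_EGF, Dy.
  - apply egf_domain_open, egf_domain_0.
Qed.

Theorem theorem1 (ks : list Z) (a b : R) :
  (1 <= length ks)%nat -> 0 < a -> 0 < b -> a * b <> 1 -> a * b <> -1 ->
  forall n : nat,
    MPEuler_ab n ks a b =
    MPEuler n ks (ln a / (ln a + ln b)) * (ln a + ln b) ^ n.
Proof.
  intros _ Ha Hb Hab _ n; unfold MPEuler_ab.
  rewrite MPEuler_gen_scale, Rplus_0_l by assumption; reflexivity.
Qed.
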